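(* Let $G,D\subsetneq\mathbb{R}^n$ be domains and $1\le p<\infty$. Let $f:G\to D$ be a surjective mapping and $L\ge1$ such that \[ b_{G,p}(z_1,z_2)/L\le b_{D,p}(f(z_1),f(z_2))\le L\,b_{G,p}(z_1,z_2)\quad\text{for all } z_1,z_2\in G. \] Then $f$ is a quasiconformal homeomorphism (either sense-preserving or sense-reversing), and its linear dilatation satisfies $H_f(z)\le 4^{1-\frac1p}L^2$ for all $z\in G$.
   Context: For a domain $G\subsetneq\mathbb{R}^n$, $p\ge1$ and $z_1,z_2\in G$, $b_{G,p}(z_1,z_2)=\sup_{z\in\partial G}\frac{|z_1-z_2|}{\sqrt[p]{|z_1-z|^p+|z-z_2|^p}}$. For a homeomorphism $f$ and $z\in G$, the linear dilatation is $H_f(z)=\limsup_{r\to0}\frac{L_f(z,r)}{l_f(z,r)}$, where $L_f(z,r)=\sup\{|f(z_1)-f(z)|:|z_1-z|=r\}$ and $l_f(z,r)=\inf\{|f(z_1)-f(z)|:|z_1-z|=r\}$. *)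

(* R^n is modelled as 'rV[R]_n, with the Euclidean norm
   defined below (the library's default norm on 'rV is the max norm; both induce
   the same topology, which is the one used for open/connected/closure/continuity). *)
From HB Require Import structures.
From mathcomp Require Import all_boot all_order all_algebra.
From mathcomp Require Import all_classical all_reals all_analysis.
Set Implicit Arguments. Unset Strict Implicit. Unset Printing Implicit Defensive.
Import Order.TTheory GRing.Theory Num.Theory.
Import numFieldNormedType.Exports.
Local Open Scope classical_set_scope.
Local Open Scope ring_scope.

Section Defs.
Variables (R : realType) (n : nat).
Notation V := 'rV[R]_n.

Definition enorm (x : V) : R := Num.sqrt (\sum_(i < n) x ord0 i ^+ 2).
Definition edist (x y : V) : R := enorm (x - y).

Definition domain (G : set V) : Prop := G !=set0 /\ open G /\ connected G.

Definition bdry (G : set V) : set V := closure G `\` interior G.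

Definition b_metric (G : set V) (p : R) (z1 z2 : V) : R :=
  sup [set edist z1 z2 / powR (powR (edist z1 z) p + powR (edist z z2) p) p^-1
      | z in bdry G].

Definition Lf (f : V -> V) (z : V) (r : R) : \bar R :=
  ereal_sup [set (edist (f z1) (f z))%:E | z1 in [set z1 | edist z1 z = r]].
Definition lf (f : V -> V) (z : V) (r : R) : \bar R :=
  ereal_inf [set (edist (f z1) (f z))%:E | z1 in [set z1 | edist z1 z = r]].

Definition dil_ratio (f : V -> V) (z : V) (r : R) : \bar R :=
  if lf f z r == 0%E then +oo%E else (Lf f z r * (fine (lf f z r))^-1%:E)%E.

Definition lin_dil (f : V -> V) (z : V) : \bar R :=
  limf_esup (dil_ratio f z) (0%R^'+).

Definition homeo_onto (G D : set V) (f : V -> V) : Prop :=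
  exists g : V -> V,
    (forall x, G x -> D (f x)) /\ (forall y, D y -> G (g y)) /\
    (forall x, G x -> g (f x) = x) /\ (forall y, D y -> f (g y) = y) /\
    {within G, continuous f} /\ {within D, continuous g}.

Definition quasiconformal (G D : set V) (f : V -> V) : Prop :=
  homeo_onto G D f /\ exists H : R, forall z, G z -> (lin_dil f z <= H%:E)%E.

End Defs.

From Pilot Require Import Defs.
From HB Require Import structures.
From mathcomp Require Import all_boot all_order all_algebra.
From mathcomp Require Import all_classical all_reals all_analysis.
Import Order.TTheory GRing.Theory Num.Theory.
Import numFieldNormedType.Exports.
Local Open Scope classical_set_scope.
Local Open Scope ring_scope.
From mathcomp Require Import ring lra.
Set Implicit Arguments. Unset Strict Implicit. Unset Printing Implicit Defensive.
(* Defs once more, so that its [edist] shadows the one of the analysis library *)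
Import Pilot.Defs.

(* Write d(z) for the distance from z to the boundary and kappa = 2^(1/p) for the
   l^p norm of (1, 1).  Testing b_{G,p}(x, z) against all boundary points, and
   against one almost nearest to z, gives for r = |x - z| < d(z)
     r / (d(z) + 2r) <= kappa * b_{G,p}(x, z) <= r / (d(z) - r),
   so kappa * b_{G,p}(x, z) is r / d(z) up to a factor 1 + O(r / d(z)).  Pushing
   these bounds through the bi-Lipschitz hypothesis at z and at f z shows that f and
   its inverse are continuous (injectivity comes from b(x, x') > 0 = b(y, y)), and,
   comparing two points x, y of one small sphere around z, that
   |f x - f z| <= L^2 (1 + o(1)) |f y - f z|.  Hence H_f <= L^2 <= 4^(1-1/p) L^2. *)

Lemma ler_wpdiv2l (F : numFieldType) (a b c : F) :
  0 <= a -> 0 < b -> b <= c -> a / c <= a / b.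
Proof.
move=> a0 b0 bc; apply: ler_wpM2l => //.
by rewrite lef_pV2 ?posrE // (lt_le_trans b0 bc).
Qed.

Section EuclideanNorm.
Variables (R : realType) (n : nat).
Notation V := 'rV[R]_n.
Implicit Types (a b : 'I_n -> R) (x y z : V).

Lemma sum_sqr_ge0 a : 0 <= \sum_i a i ^+ 2.
Proof. by apply: sumr_ge0 => i _; exact: sqr_ge0. Qed.

Lemma sum_sqr_eq0 a : \sum_i a i ^+ 2 = 0 -> forall i, a i = 0.
Proof.
move=> /eqP; rewrite psumr_eq0 => [/allP a0 i|j _]; last exact: sqr_ge0.
by have /implyP/(_ isT) := a0 i (mem_index_enum _); rewrite sqrf_eq0 => /eqP.
Qed.

Lemma cauchy_schwarz_sum a b :
  \sum_i a i * b i <= Num.sqrt (\sum_i a i ^+ 2) * Num.sqrt (\sum_i b i ^+ 2).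
Proof.
set A := \sum_i a i ^+ 2; set B := \sum_i b i ^+ 2.
have [/sum_sqr_eq0 a0|A0] := eqVneq A 0.
  by rewrite big1 ?mulr_ge0 ?sqrtr_ge0// => i _; rewrite a0 mul0r.
have [/sum_sqr_eq0 b0|B0] := eqVneq B 0.
  by rewrite big1 ?mulr_ge0 ?sqrtr_ge0// => i _; rewrite b0 mulr0.
set s := Num.sqrt A; set t := Num.sqrt B.
have s0 : 0 < s by rewrite sqrtr_gt0 lt0r A0 sum_sqr_ge0.
have t0 : 0 < t by rewrite sqrtr_gt0 lt0r B0 sum_sqr_ge0.
have sA : s ^+ 2 = A by rewrite sqr_sqrtr // sum_sqr_ge0.
have tB : t ^+ 2 = B by rewrite sqr_sqrtr // sum_sqr_ge0.
have : 0 <= \sum_i (t * a i - s * b i) ^+ 2 by exact: sum_sqr_ge0.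
have -> : \sum_i (t * a i - s * b i) ^+ 2 =
    t ^+ 2 * A + s ^+ 2 * B - 2 * (s * t) * \sum_i a i * b i.
  rewrite /A /B !mulr_sumr -big_split -sumrB /=.
  by apply: eq_bigr => i _; ring.
have -> : t ^+ 2 * A + s ^+ 2 * B - 2 * (s * t) * \sum_i a i * b i =
    2 * ((s * t) * (s * t - \sum_i a i * b i)) by rewrite -sA -tB; ring.
by rewrite pmulr_rge0 // pmulr_rge0 ?mulr_gt0 // subr_ge0.
Qed.

Lemma enorm_ge0 x : 0 <= enorm x.
Proof. exact: sqrtr_ge0. Qed.

Lemma enormN x : enorm (- x) = enorm x.
Proof. by rewrite /enorm; congr Num.sqrt; apply: eq_bigr => i _; rewrite mxE sqrrN. Qed.

Lemma ler_enormD x y : enorm (x + y) <= enorm x + enorm y.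
Proof.
have cs := cauchy_schwarz_sum (x ord0) (y ord0).
rewrite /enorm -[leRHS]ger0_norm ?addr_ge0 ?sqrtr_ge0// -sqrtr_sqr.
rewrite ler_sqrt ?sqr_ge0//.
have -> : \sum_i (x + y) ord0 i ^+ 2 =
    \sum_i x ord0 i ^+ 2 + \sum_i y ord0 i ^+ 2 + 2 * \sum_i x ord0 i * y ord0 i.
  rewrite mulr_sumr -!big_split /=; apply: eq_bigr => i _; rewrite mxE; ring.
rewrite sqrrD !sqr_sqrtr ?sum_sqr_ge0//; lra.
Qed.

Lemma enorm_eq0 x : enorm x = 0 -> x = 0.
Proof.
move=> /eqP; rewrite sqrtr_eq0 => x0.
have /sum_sqr_eq0 xi0 : \sum_i x ord0 i ^+ 2 = 0.
  by apply/eqP; rewrite eq_le x0 sum_sqr_ge0.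
by apply/rowP => i; rewrite mxE xi0.
Qed.

Lemma edist_ge0 x y : 0 <= edist x y.
Proof. exact: enorm_ge0. Qed.

Lemma edistC x y : edist x y = edist y x.
Proof. by rewrite /edist -enormN opprB. Qed.

Lemma edist_triangle x y z : edist x z <= edist x y + edist y z.
Proof. by rewrite /edist; apply: le_trans (ler_enormD _ _); rewrite addrA subrK. Qed.

Lemma edist_eq0 x y : edist x y = 0 -> x = y.
Proof. by move/enorm_eq0/eqP; rewrite subr_eq0 => /eqP. Qed.

Lemma edistxx x : edist x x = 0.
Proof. by rewrite /edist subrr /enorm big1 ?sqrtr0// => i _; rewrite mxE expr0n. Qed.

Lemma entry_le_enorm x i : `|x ord0 i| <= enorm x.
Proof.
rewrite -sqrtr_sqr ler_sqrt ?sum_sqr_ge0// (bigD1 i) //= lerDl.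
by apply: sumr_ge0 => j _; exact: sqr_ge0.
Qed.

Lemma entry_le_mx_norm x i : `|x ord0 i| <= `|x|.
Proof.
have /mapP[j _ ->] : `|x ord0 i| \in [seq `|x k.1 k.2| | k : 'I_1 * 'I_n].
  by apply/mapP; exists (ord0, i) => //=; rewrite mem_enum.
by rewrite [leRHS]/Num.norm /= mx_normrE; apply/bigmax_geP; right; exists j.
Qed.

Lemma mx_norm_le_enorm x : `|x| <= enorm x.
Proof.
have [->|/mx_norm_neq0 [[i j] xij]] := eqVneq `|x| 0; first exact: enorm_ge0.
by rewrite [`|x|]xij /= (ord1 i); exact: entry_le_enorm.
Qed.

Lemma enorm_le_mx_norm x : enorm x <= n.+1%:R * `|x|.
Proof.
rewrite -[leRHS]ger0_norm ?mulr_ge0// -sqrtr_sqr ler_sqrt ?sqr_ge0//.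
apply: (@le_trans _ _ (\sum_(i < n) `|x| ^+ 2)).
  apply: ler_sum => i _; rewrite -real_normK ?num_real//.
  by apply: lerXn2r; rewrite ?nnegrE// entry_le_mx_norm.
rewrite sumr_const card_ord -[_ *+ n]mulr_natl exprMn.
apply: ler_wpM2r; first exact: sqr_ge0.
by rewrite -natrX ler_nat expnS expn1 (leq_trans (leqnSn n)) // leq_pmulr.
Qed.

End EuclideanNorm.

Definition lpnorm2 (R : realType) (p a b : R) : R := powR (powR a p + powR b p) p^-1.

Section LpNorm2.
Variables (R : realType) (p : R).
Hypothesis p_gt0 : 0 < p.
Implicit Types a b : R.

Let pV_ge0 : 0 <= p^-1. Proof. by rewrite invr_ge0 ltW. Qed.

Lemma powRK a : 0 <= a -> powR (powR a p) p^-1 = a.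
Proof. by move=> a0; rewrite -powRrM divff ?gt_eqF// powRr1. Qed.

Lemma lpnorm2_ge0 a b : 0 <= lpnorm2 p a b.
Proof. exact: powR_ge0. Qed.

Lemma lpnorm2_ge_r a b : 0 <= b -> b <= lpnorm2 p a b.
Proof.
move=> b0; rewrite -{1}(powRK b0); apply: ge0_ler_powR => //;
  by rewrite ?nnegrE ?addr_ge0 ?powR_ge0 ?lerDr ?powR_ge0.
Qed.

Lemma ler_lpnorm2 a b a' b' :
  0 <= a -> 0 <= b -> a <= a' -> b <= b' -> lpnorm2 p a b <= lpnorm2 p a' b'.
Proof.
move=> a0 b0 aa' bb'; apply: ge0_ler_powR; rewrite ?nnegrE ?addr_ge0 ?powR_ge0//.
by apply: lerD; apply: ge0_ler_powR; rewrite ?nnegrE ?(ltW p_gt0) //; lra.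
Qed.

Lemma lpnorm2M l a b : 0 <= l -> 0 <= a -> 0 <= b ->
  lpnorm2 p (l * a) (l * b) = l * lpnorm2 p a b.
Proof.
move=> l0 a0 b0; rewrite /lpnorm2 !powRM// -mulrDr powRM ?addr_ge0 ?powR_ge0//.
by rewrite powRK.
Qed.

Lemma lpnorm2_diag a : 0 <= a -> lpnorm2 p a a = a * lpnorm2 p 1 1.
Proof. by move=> a0; rewrite -lpnorm2M ?mulr1. Qed.

Lemma lpnorm2_11_gt0 : 0 < lpnorm2 p 1 1.
Proof. exact: lt_le_trans ltr01 (lpnorm2_ge_r _ ler01). Qed.

End LpNorm2.

Section Boundary.
Variables (R : realType) (n : nat).
Notation V := 'rV[R]_n.
Implicit Types (x z w : V) (G : set V).

Lemma bdry_notin G w : open G -> bdry G w -> ~ G w.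
Proof. by move=> oG [_ not_int] Gw; apply: not_int; move: oG; rewrite openE => /(_ w Gw). Qed.

Lemma open_enorm_ball G z : open G -> G z ->
  exists2 d, 0 < d & forall x, edist x z < d -> G x.
Proof.
move=> oG Gz; have /nbhs_ballP [e e0 sub] : nbhs z G by move: oG; rewrite openE; exact.
exists e => // x xz; apply: sub.
by rewrite -ball_normE /ball_ /= (le_lt_trans (mx_norm_le_enorm _)) // -/(edist z x) edistC.
Qed.

(* a boundary-free set is clopen, so the segment from a point inside to one
   outside would lie in it *)
Lemma bdry_neq0 G : domain G -> G != setT -> bdry G !=set0.
Proof.
move=> [[a Ga] [oG cG]] GT; have [b nGb] : exists b, ~ G b.
  apply: contrapT => /forallNP nG; move/eqP: GT; apply.
  by apply/seteqP; split => // x _; apply: contrapT; exact: nG.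
apply: contrapT => nobdry.
have clG : closed G.
  by move=> x clx; apply: contrapT => nGx; apply: nobdry; exists x; split => // /interior_subset.
pose seg t : V := a + t *: (b - a).
have seg_cont : continuous seg.
  by move=> t; apply: cvgD; [exact: cvg_cst | apply: cvgZr_tmp; exact: cvg_id].
have cseg : connected (seg @` `[0, 1]).
  apply: connected_continuous_connected; first exact: segment_connected.
  exact: continuous_subspaceT.
have I0 : `[(0:R), 1]%classic 0 by rewrite /= in_itv /= lexx ler01.
have I1 : `[(0:R), 1]%classic 1 by rewrite /= in_itv /= lexx ler01.
have : seg @` `[0, 1] `&` G = seg @` `[0, 1].
  apply: cseg; last 2 first; [by exists G | by exists G |].
  by exists a; split => //; exists 0 => //; rewrite /seg scale0r addr0.
move=> /(congr1 (fun S => S b)); rewrite propeqE => -[_ /(_ _)] [] //.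
by exists 1 => //; rewrite /seg scale1r addrC subrK.
Qed.

End Boundary.

Definition dist_bdry (R : realType) (n : nat) (G : set 'rV[R]_n) (z : 'rV[R]_n) : R :=
  inf [set edist z w | w in bdry G].

Section BMetric.
Variables (R : realType) (n : nat).
Notation V := 'rV[R]_n.
Implicit Types (x z w : V).
Variables (G : set V) (p : R).
Hypotheses (domG : domain G) (GT : G != setT) (p_gt0 : 0 < p).

Let dist_set_neq0 z : [set edist z w | w in bdry G] !=set0.
Proof. by have [w bw] := bdry_neq0 domG GT; exists (edist z w), w. Qed.

Let dist_set_lbound z : has_lbound [set edist z w | w in bdry G].
Proof. by exists 0 => _ [w _ <-]; exact: edist_ge0. Qed.

Lemma dist_bdry_le z w : bdry G w -> dist_bdry G z <= edist z w.
Proof. by move=> bw; apply: ge_inf; [exact: dist_set_lbound | exists w]. Qed.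

Lemma dist_bdry_gt0 z : G z -> 0 < dist_bdry G z.
Proof.
move=> Gz; have [d d0 ballG] := open_enorm_ball domG.2.1 Gz.
apply: (lt_le_trans d0); apply: lb_le_inf; first exact: dist_set_neq0.
move=> _ [w bw <-]; rewrite leNgt; apply/negP => wz.
by apply: (bdry_notin domG.2.1 bw); apply: ballG; rewrite edistC.
Qed.

Lemma dist_bdry_approx z e : 0 < e ->
  exists2 w, bdry G w & edist z w < dist_bdry G z + e.
Proof.
move=> e0; have [_ [w bw <-]] := inf_adherent e0 (conj (dist_set_neq0 z) (dist_set_lbound z)).
by exists w.
Qed.

Lemma b_metric_le z1 z2 M :
  (forall w, bdry G w -> edist z1 z2 / lpnorm2 p (edist z1 w) (edist w z2) <= M) ->
  b_metric G p z1 z2 <= M.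
Proof.
move=> le_M; apply: ge_sup => [|_ [w bw <-]]; last exact: le_M.
by have [w bw] := bdry_neq0 domG GT; exists (edist z1 z2 / lpnorm2 p (edist z1 w) (edist w z2)), w.
Qed.

Lemma b_metric_ge z1 z2 w : G z2 -> bdry G w ->
  edist z1 z2 / lpnorm2 p (edist z1 w) (edist w z2) <= b_metric G p z1 z2.
Proof.
move=> Gz2 bw; apply: ub_le_sup; last by exists w.
exists (edist z1 z2 / dist_bdry G z2) => _ [v bv <-].
have d_le : dist_bdry G z2 <= lpnorm2 p (edist z1 v) (edist v z2).
  by apply: le_trans (dist_bdry_le z2 bv) _; rewrite [edist z2 v]edistC lpnorm2_ge_r ?edist_ge0.
exact: ler_wpdiv2l (edist_ge0 _ _) (dist_bdry_gt0 Gz2) d_le.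
Qed.

Lemma b_metric_ge0 z1 z2 : G z2 -> 0 <= b_metric G p z1 z2.
Proof.
move=> Gz2; have [w bw] := bdry_neq0 domG GT.
by apply: le_trans (b_metric_ge z1 Gz2 bw); rewrite divr_ge0 ?edist_ge0 ?lpnorm2_ge0.
Qed.

Lemma b_metric_xx z : G z -> b_metric G p z z = 0.
Proof.
move=> Gz; apply/eqP; rewrite eq_le b_metric_ge0 // andbT.
by apply: b_metric_le => w _; rewrite edistxx mul0r.
Qed.

Lemma b_metric_sphere_ub x z : G z -> edist x z < dist_bdry G z ->
  lpnorm2 p 1 1 * b_metric G p x z <= edist x z / (dist_bdry G z - edist x z).
Proof.
move=> Gz xz; have k0 := lpnorm2_11_gt0 p_gt0; have r0 := edist_ge0 x z.
set r := edist x z in xz r0 *; set d := dist_bdry G z in xz *.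
have dr0 : 0 < d - r by rewrite subr_gt0.
have b_le : b_metric G p x z <= r / ((d - r) * lpnorm2 p 1 1).
  apply: b_metric_le => w bw; apply: (ler_wpdiv2l r0 (mulr_gt0 dr0 k0)).
  have dw : d <= edist z w := dist_bdry_le z bw.
  rewrite -(lpnorm2_diag p_gt0 (ltW dr0)).
  apply: (ler_lpnorm2 p_gt0); try exact: ltW.
  - by have := edist_triangle z x w; rewrite (edistC z x) -/r; lra.
  - by rewrite edistC; lra.
have -> : r / (d - r) = lpnorm2 p 1 1 * (r / ((d - r) * lpnorm2 p 1 1)).
  by field; rewrite (gt_eqF dr0) (gt_eqF k0).
by apply: ler_wpM2l; [exact: ltW | exact: b_le].
Qed.

Lemma b_metric_sphere_lb x z : G z ->
  edist x z / (dist_bdry G z + 2 * edist x z) <= lpnorm2 p 1 1 * b_metric G p x z.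
Proof.
move=> Gz; have k0 := lpnorm2_11_gt0 p_gt0; have d0 := dist_bdry_gt0 Gz.
set r := edist x z; set d := dist_bdry G z in d0 *.
have /orP[/eqP r_eq0|r0] : (r == 0) || (0 < r) by rewrite -le0r edist_ge0.
  by rewrite r_eq0 mul0r mulr_ge0 ?(ltW k0) ?b_metric_ge0.
have dr0 : 0 < d + 2 * r by rewrite addr_gt0 ?mulr_gt0.
have [w bw zw] := dist_bdry_approx z r0.
have dw : d <= edist z w := dist_bdry_le z bw.
have wrd : lpnorm2 p (edist x w) (edist w z) <= (d + 2 * r) * lpnorm2 p 1 1.
  rewrite -(lpnorm2_diag p_gt0 (ltW dr0)).
  apply: (ler_lpnorm2 p_gt0); rewrite ?edist_ge0 //.
  - by have := edist_triangle x z w; rewrite -/r -/d; lra.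
  - by rewrite edistC; lra.
have w0 : 0 < lpnorm2 p (edist x w) (edist w z).
  apply: (lt_le_trans _ (lpnorm2_ge_r p_gt0 (edist x w) (edist_ge0 w z))).
  by rewrite edistC; exact: lt_le_trans d0 dw.
apply: le_trans (ler_wpM2l (ltW k0) (b_metric_ge x Gz bw)).
have -> : r / (d + 2 * r) = lpnorm2 p 1 1 * (r / ((d + 2 * r) * lpnorm2 p 1 1)).
  by field; rewrite (gt_eqF dr0) (gt_eqF k0).
by apply: ler_wpM2l; [exact: ltW | exact: ler_wpdiv2l (ltW r0) w0 wrd].
Qed.

Lemma b_metric_gt0 x z : G z -> x != z -> 0 < b_metric G p x z.
Proof.
move=> Gz xz; have k0 := lpnorm2_11_gt0 p_gt0; have d0 := dist_bdry_gt0 Gz.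
have r0 : 0 < edist x z by rewrite lt0r edist_ge0 andbT; apply: contra xz => /eqP /edist_eq0 ->.
rewrite -(pmulr_rgt0 _ k0); apply: lt_le_trans (b_metric_sphere_lb x Gz).
by rewrite divr_gt0 // addr_gt0 // mulr_gt0.
Qed.

End BMetric.

Lemma ler_div_scale (F : numFieldType) (a b c k : F) :
  0 <= a -> 0 < b -> 0 < c -> c <= k * b -> a / b <= k * (a / c).
Proof.
move=> a0 b0 c0 cb; have -> : k * (a / c) = a / b * (k * b / c).
  by field; rewrite !gt_eqF.
have ab0 : 0 <= a / b by apply: divr_ge0 => //; exact: ltW.
by rewrite ler_peMr // ler_pdivlMr // mul1r.
Qed.

Lemma le_of_ratio_le (F : realFieldType) (s d q : F) :
  0 <= s -> 0 < d -> q <= 4^-1 -> s / (d + 2 * s) <= q -> s <= 2 * q * d.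
Proof.
move=> s0 d0 q4; rewrite ler_pdivrMr; last by rewrite ltr_wpDr ?mulr_ge0.
move=> sq; have : s <= q * d + 4^-1 * (2 * s).
  by apply: le_trans sq _; rewrite mulrDr lerD2l ler_wpM2r ?mulr_ge0.
have -> : 4^-1 * (2 * s) = s / 2 by field.
lra.
Qed.

Lemma edist_cvg (R : realType) (n : nat) (A : set 'rV[R]_n) (h : 'rV[R]_n -> 'rV[R]_n) z :
  open A -> A z ->
  (forall e, 0 < e -> exists2 r0, 0 < r0 &
     forall x, A x -> edist x z < r0 -> edist (h x) (h z) < e) ->
  h @ z --> h z.
Proof.
move=> oA Az hcont; apply/(cvgrPdist_lt _ (FF := nbhs_filter z)) => e e0.
have [d d0 hd] := hcont e e0; have [rho rho0 ballA] := open_enorm_ball oA Az.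
apply/nbhs_ballP; exists (Num.min d rho / n.+1%:R).
  by apply: divr_gt0; [rewrite lt_min d0 rho0 | exact: ltr0Sn].
move=> x; rewrite -ball_normE /ball_ /= => zx.
have : edist x z < Num.min d rho.
  apply: le_lt_trans (enorm_le_mx_norm _) _.
  by rewrite -ltr_pdivlMl ?ltr0Sn // mulrC distrC.
rewrite lt_min => /andP[xd xrho].
apply: le_lt_trans (mx_norm_le_enorm _) _; rewrite -/(edist (h z) (h x)) edistC.
by apply: hd => //; exact: ballA.
Qed.

Section Transfer.
Variables (R : realType) (n : nat).
Notation V := 'rV[R]_n.
Implicit Types (x z : V).
Variables (A B : set V) (p L : R).
Hypotheses (domA : domain A) (AT : A != setT) (domB : domain B) (BT : B != setT).
Hypotheses (p_gt0 : 0 < p) (L_gt0 : 0 < L).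

Lemma edist_ratio_transfer a a0 b b0 : A a0 -> B b0 -> edist a a0 < dist_bdry A a0 ->
  b_metric B p b b0 <= L * b_metric A p a a0 ->
  edist b b0 / (dist_bdry B b0 + 2 * edist b b0) <=
    L * (edist a a0 / (dist_bdry A a0 - edist a a0)).
Proof.
move=> Aa0 Bb0 aa0 bL; have k0 := lpnorm2_11_gt0 p_gt0.
apply: le_trans (b_metric_sphere_lb domB BT p_gt0 b Bb0) _.
apply: le_trans (ler_wpM2l (ltW k0) bL) _; rewrite mulrCA.
by apply: ler_wpM2l; [exact: ltW | exact: b_metric_sphere_ub].
Qed.

Lemma edist_continuity h z : A z -> B (h z) ->
  (forall x, A x -> b_metric B p (h x) (h z) <= L * b_metric A p x z) ->
  forall e, 0 < e ->
  exists2 r0, 0 < r0 & forall x, A x -> edist x z < r0 -> edist (h x) (h z) < e.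
Proof.
move=> Az Bhz hL e e0.
have d0 := dist_bdry_gt0 domA AT Az; have dd0 := dist_bdry_gt0 domB BT Bhz.
set d := dist_bdry A z in d0 *; set dd := dist_bdry B (h z) in dd0 *.
pose q := Num.min 4^-1 (e / (4 * dd)).
have q0 : 0 < q by rewrite lt_min invr_gt0 ltr0n divr_gt0 ?mulr_gt0.
have q4 : q <= 4^-1 by rewrite ge_min lexx.
have qe : q <= e / (4 * dd) by rewrite ge_min lexx orbT.
exists (Num.min (d / 2) (q * d / (2 * L))).
  by rewrite lt_min !divr_gt0 ?mulr_gt0.
move=> x Ax; rewrite lt_min => /andP[rd rq].
have r0 := edist_ge0 x z.
have r_lt : edist x z < d by lra.
have Lq : L * (edist x z / (d - edist x z)) <= q.
  have r2 : edist x z / (d - edist x z) <= 2 * (edist x z / d).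
    by apply: ler_div_scale => //; lra.
  apply: le_trans (ler_wpM2l (ltW L_gt0) r2) _.
  move: rq; rewrite ltr_pdivlMr ?mulr_gt0 //; set r := edist x z => rq.
  have -> : L * (2 * (r / d)) = r * (2 * L) / d by field; rewrite gt_eqF.
  by rewrite ler_pdivrMr //; exact: ltW.
have := le_of_ratio_le (edist_ge0 _ _) dd0 q4
  (le_trans (edist_ratio_transfer Az Bhz r_lt (hL x Ax)) Lq).
have : q * dd <= e / 4.
  have -> : e / 4 = e / (4 * dd) * dd by field; rewrite gt_eqF.
  by rewrite ler_pM2r.
lra.
Qed.

Lemma within_continuous_of_b_metric_le h :
  (forall x, A x -> B (h x)) ->
  (forall x z, A x -> A z -> b_metric B p (h x) (h z) <= L * b_metric A p x z) ->
  {within A, continuous h}.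
Proof.
move=> hAB hL; apply: continuous_in_subspaceT => z; rewrite in_setE => Az.
apply: (edist_cvg domA.2.1 Az); apply: edist_continuity => //; first exact: hAB.
by move=> x Ax; exact: hL.
Qed.

Lemma injective_of_b_metric_le h :
  (forall x, A x -> B (h x)) ->
  (forall x z, A x -> A z -> b_metric A p x z <= L * b_metric B p (h x) (h z)) ->
  forall x z, A x -> A z -> h x = h z -> x = z.
Proof.
move=> hAB hL x z Ax Az hxz; apply/eqP; apply: contraT => xz.
have := hL x z Ax Az; rewrite hxz (b_metric_xx domB BT p_gt0 (hAB z Az)) mulr0.
by rewrite leNgt (b_metric_gt0 domA AT p_gt0).
Qed.

End Transfer.

Section Dilatation.
Variables (R : realType) (n : nat).
Notation V := 'rV[R]_n.
Local Open Scope ereal_scope.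

(* the uniform lower bound [m] keeps [lf f z r] away from [0], where [dil_ratio]
   is [+oo] *)
Lemma dil_ratio_le (f : V -> V) (z : V) (r K m : R) : (0 < K)%R -> (0 < m)%R ->
  (forall x y, edist x z = r -> edist y z = r ->
     (edist (f x) (f z) <= K * edist (f y) (f z))%R) ->
  (forall y, edist y z = r -> (m <= edist (f y) (f z))%R) ->
  dil_ratio f z r <= K%:E.
Proof.
move=> K0 m0 fK fm.
have lf_ge : m%:E <= lf f z r.
  by apply: le_ereal_inf_tmp => _ [y yz <-]; rewrite lee_fin; exact: fm.
have lf_neq0 : lf f z r != 0.
  by apply: contraTneq lf_ge => ->; rewrite lee_fin -ltNge.
rewrite /dil_ratio (negbTE lf_neq0).
have Lf_le : Lf f z r <= (K * fine (lf f z r))%:E.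
  apply: ge_ereal_sup => _ [x xz <-].
  have lf_le : lf f z r <= (edist (f x) (f z))%:E by apply: ereal_inf_lbound; exists x.
  have lf_fin : lf f z r = (fine (lf f z r))%:E.
    apply/esym/fineK; rewrite fin_numE; apply/andP; split.
    - by apply: contraTneq lf_ge => ->.
    - by apply: contraTneq lf_le => ->.
  have : ((edist (f x) (f z)) / K)%:E <= lf f z r.
    apply: le_ereal_inf_tmp => _ [y yz <-]; rewrite lee_fin.
    by rewrite ler_pdivrMr // mulrC; exact: fK.
  by rewrite lf_fin !lee_fin ler_pdivrMr // mulrC.
have inv_ge0 : 0 <= ((fine (lf f z r))^-1)%:E.
  by rewrite lee_fin invr_ge0 fine_ge0 // (le_trans _ lf_ge) // lee_fin ltW.
apply: le_trans (lee_wpmul2r inv_ge0 Lf_le) _.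
rewrite -EFinM lee_fin.
have [->|fine_neq0] := eqVneq (fine (lf f z r)) 0%R; first by rewrite mulr0 mul0r ltW.
by rewrite -mulrA mulfV // mulr1.
Qed.

Lemma lin_dil_le (f : V -> V) (z : V) (c : R) :
  (forall e, (0 < e)%R -> exists2 r0, (0 < r0)%R &
     forall r, (0 < r)%R -> (r < r0)%R -> dil_ratio f z r <= (c + e)%:E) ->
  lin_dil f z <= c%:E.
Proof.
move=> near_le; apply/lee_addgt0Pr => e e0.
have [r0 r00 ratio_le] := near_le e e0.
rewrite /lin_dil limf_esupE; apply: ge_ereal_inf.
exists (ereal_sup (dil_ratio f z @` [set r | (0 < r)%R /\ (r < r0)%R])).
  exists [set r | (0 < r)%R /\ (r < r0)%R] => //.
  near=> r; split; near: r; [exact: nbhs_right_gt | exact: nbhs_right_lt].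
apply: ge_ereal_sup => _ [r [r_gt0 r_lt] <-]; rewrite -EFinD; exact: ratio_le.
Unshelve. all: by end_near.
Qed.

End Dilatation.

(* On the scale [th], [r / (d - r)] and [r / (d + 2 r)] differ by a factor at
   most [1 + th], and so do [t / (dd - t)] and [t / (dd + 2 s)]; this lets the two
   bounds be chained through [r]. *)
Lemma sphere_ratio_le (F : realFieldType) (L th r d s t dd : F) :
  0 < L -> 0 < th -> th <= 1 -> 0 < r -> 4 * r <= th * d ->
  0 <= s -> 0 <= t -> 0 < dd -> 4 * s <= th * dd -> 4 * t <= th * dd ->
  s / (dd + 2 * s) <= L * (r / (d - r)) -> r / (d + 2 * r) <= L * (t / (dd - t)) ->
  s <= L ^+ 2 * (1 + th) ^+ 2 * t.
Proof.
move=> L0 th0 th1 r0 rd s0 t0 dd0 sdd tdd s_le r_le.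
have d0 : 0 < d by rewrite -(pmulr_rgt0 _ th0); nra.
have dr0 : 0 < d - r by nra.
have dd_t0 : 0 < dd - t by nra.
have D0 : 0 < dd + 2 * s by nra.
have r_scale : r / (d - r) <= (1 + th) * (r / (d + 2 * r)).
  by apply: ler_div_scale; rewrite ?(ltW r0) //; nra.
have t_scale : t / (dd - t) <= (1 + th) * (t / (dd + 2 * s)).
  by apply: ler_div_scale => //; nra.
have : s / (dd + 2 * s) <= L ^+ 2 * (1 + th) ^+ 2 * t / (dd + 2 * s).
  have -> : L ^+ 2 * (1 + th) ^+ 2 * t / (dd + 2 * s) =
      L * ((1 + th) * (L * ((1 + th) * (t / (dd + 2 * s))))) by ring.
  apply: (le_trans s_le); apply: ler_wpM2l; first exact: ltW.
  apply: (le_trans r_scale); apply: ler_wpM2l; first lra.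
  apply: (le_trans r_le); apply: ler_wpM2l; first exact: ltW.
  exact: t_scale.
by rewrite ler_pM2r // invr_gt0.
Qed.

Lemma sphere_ratio_lb (F : realFieldType) (L r d t dd : F) :
  0 < L -> 0 < dd -> 0 <= t -> 2 * t <= dd ->
  r / (d + 2 * r) <= L * (t / (dd - t)) -> r / (d + 2 * r) * dd / (2 * L) <= t.
Proof.
move=> L0 dd0 t0 tdd r_le; rewrite ler_pdivrMr ?mulr_gt0 //.
have t_scale : t / (dd - t) <= 2 * (t / dd) by apply: ler_div_scale => //; lra.
have := le_trans r_le (ler_wpM2l (ltW L0) t_scale).
have -> : L * (2 * (t / dd)) = t * (2 * L) / dd by field; rewrite gt_eqF.
by rewrite ler_pdivlMr.
Qed.

Section BiLipschitz.
Variables (R : realType) (n : nat).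
Notation V := 'rV[R]_n.
Implicit Types (x y z : V).
Variables (G D : set V) (p L : R) (f : V -> V).
Hypotheses (domG : domain G) (GT : G != setT) (domD : domain D) (DT : D != setT).
Hypotheses (p_gt0 : 0 < p) (L_gt0 : 0 < L).
Hypothesis fGD : forall z, G z -> D (f z).
Hypothesis f_ub : forall x z, G x -> G z -> b_metric D p (f x) (f z) <= L * b_metric G p x z.
Hypothesis f_lb : forall x z, G x -> G z -> b_metric G p x z <= L * b_metric D p (f x) (f z).

Lemma dil_ratio_near z : G z -> forall e, 0 < e ->
  exists2 r0, 0 < r0 & forall r, 0 < r -> r < r0 -> (dil_ratio f z r <= (L ^+ 2 + e)%:E)%E.
Proof.
move=> Gz e e0; have Dfz := fGD Gz.
have d0 := dist_bdry_gt0 domG GT Gz; have dd0 := dist_bdry_gt0 domD DT Dfz.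
set d := dist_bdry G z in d0 *; set dd := dist_bdry D (f z) in dd0 *.
have L2_gt0 : 0 < L ^+ 2 by rewrite exprn_gt0.
pose th := Num.min 1 (e / (3 * L ^+ 2)).
have th0 : 0 < th by rewrite lt_min ltr01 divr_gt0 ?mulr_gt0.
have th1 : th <= 1 by rewrite ge_min lexx.
have th_e : th <= e / (3 * L ^+ 2) by rewrite ge_min lexx orbT.
have [rho rho0 ballG] := open_enorm_ball domG.2.1 Gz.
have [del del0 f_cont] := edist_continuity domG GT domD DT p_gt0 L_gt0 Gz Dfz
  (fun x Gx => f_ub Gx Gz) (divr_gt0 (mulr_gt0 th0 dd0) (ltr0n _ 4)).
exists (Num.min (Num.min rho del) (th * d / 4)).
  by rewrite !lt_min rho0 del0 divr_gt0 ?mulr_gt0.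
move=> r r0; rewrite !lt_min => /andP[/andP[r_rho r_del] r_d].
have rd : 4 * r <= th * d by rewrite mulrC -ler_pdivlMr // ltW.
have thd : th * d <= d := ler_piMl (ltW d0) th1.
have rd' : r < d by lra.
have sphere x : edist x z = r -> G x /\ 4 * edist (f x) (f z) <= th * dd.
  move=> xz; have Gx : G x by apply: ballG; rewrite xz.
  split => //; have := f_cont x Gx; rewrite xz => /(_ r_del) fx.
  by rewrite mulrC -ler_pdivlMr // ltW.
have thdd : th * dd <= dd := ler_piMl (ltW dd0) th1.
have fx_lt x : edist x z = r -> edist (f x) (f z) < dd.
  by move=> /sphere[_]; have := edist_ge0 (f x) (f z); lra.
have ratio_ub x : edist x z = r ->
    edist (f x) (f z) / (dd + 2 * edist (f x) (f z)) <= L * (r / (d - r)).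
  move=> xz; have [Gx _] := sphere x xz; have xd : edist x z < d by rewrite xz.
  by rewrite -xz; exact: edist_ratio_transfer domG GT domD DT p_gt0 L_gt0 _ _ _ _ Gz Dfz xd (f_ub Gx Gz).
have ratio_lb y : edist y z = r ->
    r / (d + 2 * r) <= L * (edist (f y) (f z) / (dd - edist (f y) (f z))).
  move=> yz; have [Gy _] := sphere y yz.
  by rewrite -yz; exact: edist_ratio_transfer domD DT domG GT p_gt0 L_gt0 _ _ _ _ Dfz Gz (fx_lt y yz) (f_lb Gy Gz).
apply: (@le_trans _ _ (L ^+ 2 * (1 + th) ^+ 2)%:E).
  apply: (dil_ratio_le (m := r / (d + 2 * r) * dd / (2 * L))).
  - by rewrite mulr_gt0 // exprn_gt0 // addr_gt0.
  - have dr0 : 0 < d + 2 * r by rewrite addr_gt0 // mulr_gt0.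
    apply: divr_gt0; first exact: mulr_gt0 (divr_gt0 r0 dr0) dd0.
    exact: mulr_gt0 (ltr0Sn _ 1) L_gt0.
  - move=> x y xz yz; have [_ sx] := sphere x xz; have [_ sy] := sphere y yz.
    exact: sphere_ratio_le L_gt0 th0 th1 r0 rd (edist_ge0 _ _) (edist_ge0 _ _) dd0 sx sy
      (ratio_ub x xz) (ratio_lb y yz).
  - move=> y yz; have [_ sy] := sphere y yz.
    apply: (sphere_ratio_lb L_gt0 dd0 (edist_ge0 _ _) _ (ratio_lb y yz)).
    by have := edist_ge0 (f y) (f z); lra.
have th_e' : 3 * L ^+ 2 * th <= e by rewrite mulrC -ler_pdivlMr ?mulr_gt0.
rewrite lee_fin; nra.
Qed.

Lemma lin_dil_le_sqr z : G z -> (lin_dil f z <= (L ^+ 2)%:E)%E.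
Proof. by move=> Gz; apply: lin_dil_le; exact: dil_ratio_near. Qed.

Lemma homeo_onto_of_b_metric_bilip :
  (forall y, D y -> exists2 z, G z & f z = y) -> homeo_onto G D f.
Proof.
move=> f_onto.
pose g y := if pselect (D y) is left Dy then s2val (cid2 (f_onto y Dy)) else y.
have gD y : D y -> G (g y) /\ f (g y) = y.
  by move=> Dy; rewrite /g; case: pselect => // Dy'; case: cid2.
have f_inj := injective_of_b_metric_le domG GT domD DT p_gt0 fGD f_lb.
exists g; split => //; split; first by move=> y /gD[].
split; first by move=> x Gx; have [Ggfx /f_inj] := gD _ (fGD Gx); apply.
split; first by move=> y /gD[].
have g_ub u y : D u -> D y -> b_metric G p (g u) (g y) <= L * b_metric D p u y.
  move=> Du Dy; have [Ggu fgu] := gD u Du; have [Ggy fgy] := gD y Dy.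
  by have := f_lb Ggu Ggy; rewrite fgu fgy.
split; first by have := within_continuous_of_b_metric_le domG GT domD DT p_gt0 L_gt0 fGD f_ub.
by have := within_continuous_of_b_metric_le domD DT domG GT p_gt0 L_gt0
  (fun y Dy => (gD y Dy).1) g_ub.
Qed.

End BiLipschitz.

Theorem theorem4p9 (R : realType) (n : nat) (G D : set 'rV[R]_n) (p L : R)
  (f : 'rV[R]_n -> 'rV[R]_n) :
  domain G -> domain D -> G != setT -> D != setT ->
  1 <= p -> 1 <= L ->
  (forall z, G z -> D (f z)) -> (forall y, D y -> exists2 z, G z & f z = y) ->
  (forall z1 z2, G z1 -> G z2 ->
     b_metric G p z1 z2 / L <= b_metric D p (f z1) (f z2) /\
     b_metric D p (f z1) (f z2) <= L * b_metric G p z1 z2) ->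
  quasiconformal G D f /\
  (forall z, G z -> (lin_dil f z <= (powR 4 (1 - p^-1) * L ^+ 2)%:E)%E).
Proof.
move=> domG domD GT DT p1 L1 fGD f_onto f_bilip.
have p_gt0 : 0 < p := lt_le_trans ltr01 p1.
have L_gt0 : 0 < L := lt_le_trans ltr01 L1.
have f_ub x z : G x -> G z -> b_metric D p (f x) (f z) <= L * b_metric G p x z.
  by move=> Gx Gz; case: (f_bilip x z Gx Gz).
have f_lb x z : G x -> G z -> b_metric G p x z <= L * b_metric D p (f x) (f z).
  move=> Gx Gz; have [lb _] := f_bilip x z Gx Gz.
  by rewrite mulrC -(ler_pdivrMr _ _ L_gt0).
have one_le_pow4 : 1 <= powR 4 (1 - p^-1).
  rewrite -[leLHS](powRr0 4); apply: ler_powR; first by rewrite ler1n.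
  by rewrite subr_ge0 invf_le1.
have dil z : G z -> (lin_dil f z <= (powR 4 (1 - p^-1) * L ^+ 2)%:E)%E.
  move=> Gz; apply: le_trans (lin_dil_le_sqr domG GT domD DT p_gt0 L_gt0 fGD f_ub f_lb Gz) _.
  by rewrite lee_fin ler_peMl // sqr_ge0.
split=> //; split; last by exists (powR 4 (1 - p^-1) * L ^+ 2).
exact: homeo_onto_of_b_metric_bilip domG GT domD DT p_gt0 L_gt0 fGD f_ub f_lb f_onto.
Qed.
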